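(* Let $(S,\mathrm{d})$ be a complete separable metric space with a Borel probability measure $\mu$, let $\Sigma=S^{\mathbb{Z}_-}$ with the product topology, and let $\phi\in C_b(\Sigma)$. Then the map $L_\phi^*:\mathcal{M}(\Sigma)\to\mathcal{M}(\Sigma)$ is continuous with respect to the weak topology, i.e. whenever $\nu_n\to\nu$ weakly in $\mathcal M(\Sigma)$ (that is, $\int f\,d\nu_n\to\int f\,d\nu$ for all $f\in C_b(\Sigma)$), then $L_\phi^*\nu_n\to L_\phi^*\nu$ weakly.
   Context: $\mathbb{Z}_-=\{-1,-2,\dots\}$; elements of $\Sigma$ are written $\bar x=(\dots x_{-2}x_{-1})$, and for $z\in S$, $\bar x z:=(\dots x_{-2}x_{-1}z)\in\Sigma$ denotes the sequence obtained by appending $z$ as the new coordinate $-1$ (the old coordinate $-i$ becoming coordinate $-i-1$). $\mathcal M(\Sigma)$ is the space of finite signed Borel measures on $\Sigma$ and $C_b(\Sigma)$ the bounded continuous real functions. The adjoint Ruelle operator is $(L_\phi^*\nu)(A):=\int_\Sigma\nu(d\bar x)\int_S\mathbf 1_{\{\bar xz\in A\}}e^{\phi(\bar xz)}\mu(dz)$ for Borel $A\subset\Sigma$. *)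

From HB Require Import structures.
From mathcomp Require Import all_boot all_order all_algebra.
From mathcomp Require Import all_classical all_reals all_analysis.
Set Implicit Arguments. Unset Strict Implicit. Unset Printing Implicit Defensive.
Import Order.TTheory GRing.Theory Num.Theory numFieldNormedType.Exports.
Local Open Scope classical_set_scope.
Local Open Scope ring_scope.
Local Open Scope ereal_scope.

Definition borel (T : ptopologicalType) := g_sigma_algebraType (@open T).

(* Sigma = S^{Z_-} with the product topology.  A point x : nat -> S encodes
   the sequence (... x_{-2} x_{-1}) via x_{-(k+1)} = x k. *)
Definition Sigma (S : ptopologicalType) : Type := {ptws nat -> S}.
HB.instance Definition _ (S : ptopologicalType) := Topological.on (Sigma S).
HB.instance Definition _ (S : ptopologicalType) := Pointed.on (Sigma S).

(* x z : append z as the new coordinate -1; old coordinate -i becomes -i-1. *)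
Definition sappend (S : ptopologicalType) (x : Sigma S) (z : S) : Sigma S :=
  fun k => if k is k'.+1 then x k' else z.

Definition separable (T : topologicalType) :=
  exists D : set T, countable D /\ closure D = setT.

Definition bounded_fun (T : Type) (R : realType) (f : T -> R) :=
  exists M : R, forall x, (`|f x| <= M)%R.

Definition Cb (T : topologicalType) (R : realType) (f : T -> R) :=
  continuous (f : T -> R^o) /\ bounded_fun f.

(* Finite signed Borel measures are mathcomp charges.  Integration against a
   charge is defined through its Jordan decomposition (for a Hahn
   decomposition chosen by the axiom of choice; the result does not depend on
   the choice). *)
Section charge_integral.
Context d (T : measurableType d) (R : realType).

Definition hahnP (nu : {charge set T -> \bar R}) :
  {P : set T | exists N, hahn_decomposition nu P N} :=
  cid (Hahn_decomposition nu).

Definition hahnN (nu : {charge set T -> \bar R}) :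
  {N : set T | hahn_decomposition nu (sval (hahnP nu)) N} :=
  cid (svalP (hahnP nu)).

Definition cpos (nu : {charge set T -> \bar R}) := jordan_pos (svalP (hahnN nu)).
Definition cneg (nu : {charge set T -> \bar R}) := jordan_neg (svalP (hahnN nu)).

Definition cint (nu : {charge set T -> \bar R}) (f : T -> \bar R) : \bar R :=
  \int[cpos nu]_x f x - \int[cneg nu]_x f x.

End charge_integral.

Definition weak_cvg (T : ptopologicalType) (R : realType)
  (nu_ : nat -> {charge set borel T -> \bar R}) (nu : {charge set borel T -> \bar R}) :=
  forall f : T -> R, Cb f ->
    cint (nu_ n) (fun x => (f x)%:E) @[n --> \oo] --> cint nu (fun x => (f x)%:E).

Definition Lstar (R : realType) (S : ptopologicalType)
  (mu : probability (borel S) R) (phi : Sigma S -> R)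
  (nu : {charge set borel (Sigma S) -> \bar R}) (A : set (Sigma S)) : \bar R :=
  cint nu (fun x : borel (Sigma S) =>
    \int[mu]_z ((\1_A (sappend x z)) * expR (phi (sappend x z)))%:E).

From HB Require Import structures.
From mathcomp Require Import all_boot all_order all_algebra.
From mathcomp Require Import all_classical all_reals all_analysis.
From mathcomp Require Import measurable_realfun lra.

Import Order.TTheory GRing.Theory Num.Theory numFieldNormedType.Exports.
Local Open Scope classical_set_scope.
Local Open Scope ring_scope.

(* Write (L f)(x) = int f(xz) e^{phi(xz)} mu(dz) for the Ruelle operator on
   functions, so that (L^* nu)(A) = int L 1_A dnu.  The heart of the proof is
   the duality  int f d(L^* nu) = int (L f) dnu  for every f in C_b(Sigma):
   once it is known, weak continuity of L^* is weak convergence of nu_n tested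
   against L f, which lies in C_b(Sigma) by dominated convergence.  Duality
   holds for f = 1_U with U open by definition of L^*, hence for the
   staircase functions (1/n) sum_k 1_{f > k/n} approximating a bounded
   continuous f >= 0 from below, hence for f itself by dominated convergence,
   and then for every f in C_b by a shift.  Measurability of L 1_U comes from
   its lower semicontinuity (Fatou along sequences, Sigma being metrizable). *)

Section sequential_criteria.
Context {R : realType} {T : pseudoMetricType R}.

Lemma not_nbhs_seq (x : T) (P : set T) : ~ nbhs x P ->
  exists2 u : nat -> T, u n @[n --> \oo] --> x & forall n, ~ P (u n).
Proof.
move=> nP.
suff /choice[u uP] : forall n, exists y, ball x n.+1%:R^-1 y /\ ~ P y.
  exists u => [|n]; last exact: (uP n).2.
  apply/cvg_ballP => e e0; near=> n; apply: le_ball (uP n).1; apply: ltW.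
  by near: n; exact: (near_infty_natSinv_lt (PosNum e0)).
move=> n; apply: contrapT => /forallNP uP; apply: nP.
apply/nbhs_ballP; exists n.+1%:R^-1 => //= y xy.
by apply: contrapT => Py; apply: (uP y).
Unshelve. all: by end_near. Qed.

Lemma seq_continuous (U : topologicalType) (f : T -> U) :
  (forall x (u : nat -> T), u n @[n --> \oo] --> x -> f (u n) @[n --> \oo] --> f x) ->
  continuous f.
Proof.
move=> fu x V fxV; apply: contrapT => /(@not_nbhs_seq x (f @^-1` V))[u ux uV].
by have [N _ /(_ N (leqnn N))] := fu x u ux V fxV; exact: uV.
Qed.

End sequential_criteria.

Lemma continuous_sappendz {S : puniformType} (x : Sigma S) :
  continuous (sappend x : S -> Sigma S).
Proof.
move=> z; apply/pointwise_cvgP => -[|k] //=.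
by move=> A /nbhs_singleton Axk; exact: nearW.
Qed.

Lemma continuous_sappendx {S : puniformType} (z : S) :
  continuous (fun x : Sigma S => sappend x z).
Proof.
move=> x; apply/pointwise_cvgP => -[|k] /=.
  move=> A /nbhs_singleton Az; change (nbhs x [set y : Sigma S | A z]).
  exact: filterS filterT.
exact: (@proj_continuous nat (fun _ => S) k x).
Qed.

Section borel_measurable.
Context {R : realType}.

Lemma continuous_borel_measurable {T U : ptopologicalType} {f : T -> U} :
  continuous f -> measurable_fun setT (f : borel T -> borel U).
Proof.
move=> cf; apply: (@measurability _ _ (borel T) (borel U) setT f (@open U)) => //.
move=> _ [B oB <-]; apply: sub_sigma_algebra; rewrite setTI.
exact: open_comp.
Qed.

Lemma lower_semicontinuous_borel_measurable {T : ptopologicalType} {f : T -> R} :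
  lower_semicontinuous (EFin \o f) -> measurable_fun setT (f : borel T -> R).
Proof.
move=> /lower_semicontinuousP lsc_f.
apply: (measurability _ (RGenOInfty.measurableE R)) => //.
move=> _ [_ [r ->] <-]; apply: sub_sigma_algebra; rewrite setTI.
by rewrite preimage_itvoy; exact: lsc_f.
Qed.

Lemma continuous_borel_measurableR {T : ptopologicalType} {f : T -> R} :
  continuous f -> measurable_fun setT (f : borel T -> R).
Proof.
move=> cf; apply: lower_semicontinuous_borel_measurable; apply/lower_semicontinuousP => r.
change (open (f @^-1` [set y | r < y])).
by apply: open_comp => [x _|]; [exact: cf|exact: open_gt].
Qed.

Lemma measurable_Cb {T : ptopologicalType} {f : T -> R} :
  Cb f -> measurable_fun setT (f : borel T -> R).
Proof. by case=> fc _; exact: continuous_borel_measurableR. Qed.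

End borel_measurable.

Section finite_measure_Rintegral.
Context {d} {T : measurableType d} {R : realType}.
Context {m : {finite_measure set T -> \bar R}}.

Lemma bounded_integrable {f : T -> R} {B : R} : measurable_fun setT f ->
  (forall x, `|f x| <= B) -> m.-integrable setT (EFin \o f).
Proof.
move=> mf fB; apply: (@le_integrable _ _ _ m _ measurableT _ (EFin \o cst B)).
- exact/measurable_EFinP.
- by move=> x _ /=; rewrite lee_fin (le_trans (fB x)) ?ler_norm.
- exact: finite_measure_integrable_cst.
Qed.

Lemma bounded_RintegralE {f : T -> R} {B : R} : measurable_fun setT f ->
  (forall x, `|f x| <= B) -> (\int[m]_x (f x)%:E)%E = (\int[m]_x f x)%:E.
Proof.
move=> mf fB.
by rewrite /Rintegral fineK// integrable_fin_num// (bounded_integrable mf fB).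
Qed.

Lemma Rintegral_lincomb N (a : nat -> R) {f : nat -> T -> R} {B : R} :
  (forall k, measurable_fun setT (f k)) -> (forall k x, `|f k x| <= B) ->
  \int[m]_x (\sum_(k < N) a k * f k x) = \sum_(k < N) a k * \int[m]_x f k x.
Proof.
move=> mf fB; have fi k := bounded_integrable (mf k) (fB k).
rewrite {1}/Rintegral; under eq_integral do rewrite -sumEFin.
rewrite integral_sum//; last first.
  move=> k; apply: (@bounded_integrable _ (`|a k| * B)) => [|x].
    exact: measurable_funM.
  by rewrite normrM ler_wpM2l.
rewrite (eq_bigr (fun k : 'I_N => (a k * \int[m]_x f k x)%:E)) ?sumEFin// => k _.
under eq_integral do rewrite EFinM.
rewrite integralZl//; last exact: fi.
(* [integralZl] states the integral against the underlying measure of [m],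
   which [rewrite] does not unify with the one in [bounded_RintegralE]. *)
change ((a k)%:E * \int[m]_x (f k x)%:E = ((a k * Rintegral m setT (f k))%R)%:E)%E.
by rewrite (bounded_RintegralE (mf k) (fB k)).
Qed.

Lemma cvg_Rintegral_bounded {f_ : nat -> T -> R} {f : T -> R} {B : R} :
  (forall n, measurable_fun setT (f_ n)) -> (forall n x, `|f_ n x| <= B) ->
  (forall x, f_ n x @[n --> \oo] --> f x) ->
  \int[m]_x f_ n x @[n --> \oo] --> \int[m]_x f x.
Proof.
move=> mf_ f_B f_f.
have mf : measurable_fun setT f := measurable_fun_cvg mf_ (fun x _ => f_f x).
have fB x : `|f x| <= B.
  have f_fx : `|f_ n x| @[n --> \oo] --> `|f x| by apply: cvg_norm; exact: f_f.
  by rewrite -(cvg_lim _ f_fx)//; apply: limr_le; [exact: cvgP f_fx|exact: nearW].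
apply: fine_cvg; rewrite -(bounded_RintegralE mf fB).
apply: (@dominated_cvg _ _ _ m setT measurableT _ _ (EFin \o cst B)) => //.
- by move=> n; exact/measurable_EFinP.
- by move=> x _; apply: cvg_EFin; [exact: nearW|exact: f_f].
- exact: finite_measure_integrable_cst.
- by move=> n x _ /=; rewrite lee_fin.
Qed.

End finite_measure_Rintegral.

Section charge_Rintegral.
Context {d} {T : measurableType d} {R : realType}.
Implicit Types (nu : {charge set T -> \bar R}) (f g : T -> R).

Definition Rcint nu f : R := \int[cpos nu]_x f x - \int[cneg nu]_x f x.

Lemma cintE nu {f} {B : R} : measurable_fun setT f -> (forall x, `|f x| <= B) ->
  cint nu (fun x => (f x)%:E) = (Rcint nu f)%:E.
Proof. by move=> mf fB; rewrite /cint !(bounded_RintegralE mf fB). Qed.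

Lemma Rcint_indic nu {A} : measurable A -> Rcint nu \1_A = fine (nu A).
Proof.
move=> mA; rewrite (jordan_decomp (svalP (hahnN nu)) mA) /cadd/= cscaleN1.
by rewrite /Rcint /Rintegral !integral_indic// !setIT fineB ?fin_num_measure.
Qed.

Lemma RcintB nu {f g} {B : R} : measurable_fun setT f -> measurable_fun setT g ->
  (forall x, `|f x| <= B) -> (forall x, `|g x| <= B) ->
  Rcint nu (fun x => f x - g x) = Rcint nu f - Rcint nu g.
Proof.
move=> mf mg fB gB.
rewrite /Rcint !RintegralB//; first lra.
all: by [exact: bounded_integrable mf fB|exact: bounded_integrable mg gB].
Qed.

Lemma Rcint_lincomb nu N (a : nat -> R) {f : nat -> T -> R} {B : R} :
  (forall k, measurable_fun setT (f k)) -> (forall k x, `|f k x| <= B) ->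
  Rcint nu (fun x => \sum_(k < N) a k * f k x) = \sum_(k < N) a k * Rcint nu (f k).
Proof.
move=> mf fB; rewrite /Rcint !(Rintegral_lincomb _ a mf fB) -sumrB.
by apply: eq_bigr => k _; rewrite mulrBr.
Qed.

Lemma cvg_Rcint nu {f_ : nat -> T -> R} {f} {B : R} :
  (forall n, measurable_fun setT (f_ n)) -> (forall n x, `|f_ n x| <= B) ->
  (forall x, f_ n x @[n --> \oo] --> f x) ->
  Rcint nu (f_ n) @[n --> \oo] --> Rcint nu f.
Proof.
by move=> mf_ f_B f_f; apply: cvgB; exact: cvg_Rintegral_bounded f_B f_f.
Qed.

End charge_Rintegral.

Lemma normr_indic_le1 {T : Type} {R : realType} (A : set T) x : `|\1_A x : R| <= 1.
Proof. by rewrite indicE; case: (x \in A); rewrite ?normr1 ?normr0. Qed.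

Lemma sum_ltr_nat_bounds {R : realType} (v : R) (N : nat) : 0 <= v ->
  let s := \sum_(k < N) (k.+1%:R < v)%R%:R in
  [/\ s <= v, s <= N%:R & v - 1 <= s \/ s = N%:R].
Proof.
move=> v0; elim: N => [|N [IH1 IH2 IH3]] /=.
  by rewrite big_ord0; split => //; right.
rewrite big_ord_recr /=; set s := \sum_(i < N) _ in IH1 IH2 IH3 *.
rewrite -natr1; have [Nv|vN] := ltP (N%:R + 1 : R) v.
- by rewrite mulr1n; split; lra.
- by rewrite mulr0n addr0; split; lra.
Qed.

Section staircase.
Context {R : realType} {T : topologicalType} (h : T -> R).

Definition stair_level (n k : nat) := [set y | k.+1%:R < n.+1%:R * h y].

Definition stair (B n : nat) (y : T) : R :=
  \sum_(k < n.+1 * B) n.+1%:R^-1 * \1_(stair_level n k) y.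

Lemma open_stair_level n k : continuous h -> open (stair_level n k).
Proof.
move=> hc; change (open ((fun y => n.+1%:R * h y) @^-1` [set r | k.+1%:R < r])).
apply: open_comp => [y _|]; last exact: open_gt.
by apply: cvgM; [exact: cvg_cst|exact: hc].
Qed.

Lemma stair_bounds (B n : nat) {y} : 0 <= h y <= B%:R ->
  0 <= stair B n y <= h y /\ h y - n.+1%:R^-1 <= stair B n y.
Proof.
move=> /andP[h0 hB]; set c : R := n.+1%:R^-1; set v := n.+1%:R * h y.
have -> : stair B n y = c * \sum_(k < n.+1 * B) (k.+1%:R < v)%R%:R.
  rewrite mulr_sumr; apply: eq_bigr => k _; rewrite indicE.
  have [kv|kv] := boolP (k.+1%:R < v); first by rewrite mem_set.
  by rewrite memNset//; apply/negP.
have [sv _ sN] := @sum_ltr_nat_bounds R v (n.+1 * B) (mulr_ge0 (ler0n _ _) h0).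
have c0 : 0 < c by rewrite invr_gt0.
have cv : c * v = h y by rewrite /v mulrA mulVf ?mul1r.
have vN : v <= (n.+1 * B)%:R by rewrite natrM ler_wpM2l.
set s := \sum_(k < _) _ in sv sN *; have s0 : 0 <= s by apply: sumr_ge0 => k _.
have vs : v - 1 <= s by case: sN => // ->; lra.
have := mulr_ge0 (ltW c0) s0; have := ler_wpM2l (ltW c0) sv.
have := ler_wpM2l (ltW c0) vs; rewrite mulrBr mulr1 cv => *.
by split; [apply/andP; split|]; lra.
Qed.

Lemma stair_cvg (B : nat) {y} : 0 <= h y <= B%:R -> stair B n y @[n --> \oo] --> h y.
Proof.
move=> hy; apply/cvgrPdist_le => e e0; near=> n.
have [/andP[_ sh] hs] := stair_bounds B n hy.
rewrite ger0_norm ?subr_ge0// lerBlDr -lerBlDl; apply: le_trans hs; rewrite lerB//.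
by apply: ltW; near: n; exact: (near_infty_natSinv_lt (PosNum e0)).
Unshelve. all: by end_near. Qed.

End staircase.

Lemma measurable_indic_stair_level {R : realType} {T : ptopologicalType} (h : T -> R) n k :
  continuous h -> measurable_fun setT (\1_(stair_level h n k) : borel T -> R).
Proof.
by move=> hc; apply: measurable_indic; apply: sub_sigma_algebra; exact: open_stair_level.
Qed.

Lemma measurable_stair {R : realType} {T : ptopologicalType} (h : T -> R) B n :
  continuous h -> measurable_fun setT (stair h B n : borel T -> R).
Proof.
move=> hc; apply: measurable_sum => k; apply: measurable_funM => //.
exact: measurable_indic_stair_level.
Qed.

Lemma indic_open_cvg {T : topologicalType} {R : realType} {U : set T}
    {y_ : nat -> T} {y : T} : open U -> y_ n @[n --> \oo] --> y ->
  \1_U (y_ n) * \1_U y @[n --> \oo] --> (\1_U y : R).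
Proof.
move=> oU y_y; apply: cvg_near_cst.
have [yU|yNU] := boolP (y \in U); last first.
  by near=> n; rewrite [\1_U y]indicE (negbTE yNU) mulr0.
have /y_y y_U : nbhs y U by apply: open_nbhs_nbhs; split => //; exact: set_mem.
near=> n; have /mem_set y_nU : U (y_ n) by near: n.
by rewrite !indicE yU y_nU mulr1.
Unshelve. all: by end_near. Qed.

Section ruelle_operator.
Context {R : realType} {S : pseudoPMetricType R}.
Variables (mu : probability (borel S) R) (phi : Sigma S -> R) (M : R).
Hypotheses (phi_cont : continuous phi) (phi_le : forall y, phi y <= M).
Local Notation X := (borel (Sigma S)).

Definition ruelle (f : Sigma S -> R) (x : Sigma S) : R :=
  \int[mu]_z (f (sappend x z) * expR (phi (sappend x z))).

Let continuous_expR_phi : continuous (expR \o phi).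
Proof. by move=> y; exact: continuous_comp (@phi_cont _) (@continuous_expR R _). Qed.

Let continuous_weight x : continuous (fun z => expR (phi (sappend x z))).
Proof.
move=> z; apply: (@continuous_comp _ _ _ (sappend x) (expR \o phi)).
  exact: continuous_sappendz.
exact: continuous_expR_phi.
Qed.

Lemma measurable_ruelle_integrand {f} x : measurable_fun setT (f : X -> R) ->
  measurable_fun setT (fun z : borel S => f (sappend x z) * expR (phi (sappend x z))).
Proof.
move=> mf; apply: measurable_funM.
  exact: measurableT_comp mf (continuous_borel_measurable (continuous_sappendz x)).
exact: continuous_borel_measurableR (continuous_weight x).
Qed.

Lemma ruelle_integrand_bound {f} {B : R} x z : (forall y, `|f y| <= B) ->
  `|f (sappend x z) * expR (phi (sappend x z))| <= B * expR M.
Proof.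
move=> fB; rewrite normrM (gtr0_norm (expR_gt0 _)).
by apply: ler_pM; rewrite ?normr_ge0 ?expR_ge0 ?ler_expR ?fB ?phi_le.
Qed.

Lemma integrable_ruelle_integrand {f} {B : R} x : measurable_fun setT (f : X -> R) ->
  (forall y, `|f y| <= B) ->
  mu.-integrable setT (EFin \o (fun z => f (sappend x z) * expR (phi (sappend x z)))).
Proof.
move=> mf fB.
exact: bounded_integrable (measurable_ruelle_integrand x mf) (ruelle_integrand_bound x ^~ fB).
Qed.

Lemma ruelle_bound {f} {B : R} x : measurable_fun setT (f : X -> R) ->
  (forall y, `|f y| <= B) -> `|ruelle f x| <= B * expR M.
Proof.
move=> mf fB; have mg := measurable_ruelle_integrand x mf.
have gB := ruelle_integrand_bound x ^~ fB.
rewrite -lee_fin EFin_normr_Rintegral//; last exact: integrable_ruelle_integrand x mf fB.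
apply: le_trans (le_abse_integral _ _ _) _ => //; first exact/measurable_EFinP.
rewrite -[leRHS]mule1 -(probability_setT mu).
apply: integral_le_bound => //.
- exact/measurable_EFinP.
- by rewrite lee_fin (le_trans _ (gB point)).
- by apply: aeW => z _; rewrite lee_fin.
Qed.

Lemma ruelle_cvg {f_ : nat -> Sigma S -> R} {f} {B : R} x :
  (forall n, measurable_fun setT (f_ n : X -> R)) -> (forall n y, `|f_ n y| <= B) ->
  (forall y, f_ n y @[n --> \oo] --> f y) -> ruelle (f_ n) x @[n --> \oo] --> ruelle f x.
Proof.
move=> mf_ f_B f_f; apply: (cvg_Rintegral_bounded (B := B * expR M)).
- by move=> n; exact: measurable_ruelle_integrand.
- by move=> n z; exact: ruelle_integrand_bound.
- by move=> z; apply: cvgM; [exact: f_f|exact: cvg_cst].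
Qed.

Lemma ruelle_Cb {f} : Cb f -> Cb (ruelle f).
Proof.
move=> fCb; have mf := measurable_Cb fCb; have [fc [B fB]] := fCb.
split; last by exists (B * expR M) => x; exact: ruelle_bound.
apply: (@seq_continuous R {ptws nat -> S}) => x u ux.
apply: (cvg_Rintegral_bounded (B := B * expR M)).
- by move=> n; exact: measurable_ruelle_integrand.
- by move=> n z; exact: ruelle_integrand_bound.
- move=> z; have uzxz := cvg_comp _ _ ux (continuous_sappendx z x).
  apply: cvgM; first exact: cvg_comp uzxz (fc _).
  exact: cvg_comp uzxz (continuous_expR_phi _).
Qed.

Lemma ruelle_lincomb N (a : nat -> R) {f : nat -> Sigma S -> R} {B : R} x :
  (forall k, measurable_fun setT (f k : X -> R)) -> (forall k y, `|f k y| <= B) ->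
  ruelle (fun y => \sum_(k < N) a k * f k y) x = \sum_(k < N) a k * ruelle (f k) x.
Proof.
move=> mf fB; rewrite /ruelle -(@Rintegral_lincomb _ _ _ mu N a
  (fun k z => f k (sappend x z) * expR (phi (sappend x z))) (B * expR M)).
- apply: eq_Rintegral => z _; rewrite mulr_suml.
  by apply: eq_bigr => k _; rewrite mulrA.
- by move=> k; exact: measurable_ruelle_integrand.
- by move=> k z; exact: ruelle_integrand_bound.
Qed.

Lemma ruelleB {f g} {B : R} x :
  measurable_fun setT (f : X -> R) -> measurable_fun setT (g : X -> R) ->
  (forall y, `|f y| <= B) -> (forall y, `|g y| <= B) ->
  ruelle (fun y => f y - g y) x = ruelle f x - ruelle g x.
Proof.
move=> mf mg fB gB; rewrite /ruelle -RintegralB//.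
- by apply: eq_Rintegral => z _; rewrite mulrBl.
- exact: integrable_ruelle_integrand x mf fB.
- exact: integrable_ruelle_integrand x mg gB.
Qed.

Lemma ruelle_indic_le_of_cvg U x (u : nat -> Sigma S) (r : R) : open U ->
  u n @[n --> \oo] --> x -> (forall n, ruelle \1_U (u n) <= r) -> ruelle \1_U x <= r.
Proof.
move=> oU ux ur.
have mU : measurable_fun setT (\1_U : X -> R).
  by apply: measurable_indic; exact: sub_sigma_algebra.
(* [g n] is dominated by the integrand at [u n] and, U being open, converges
   pointwise to the integrand at [x]. *)
pose g n z := \1_U (sappend (u n) z) * expR (phi (sappend (u n) z)) * \1_U (sappend x z).
have mg n : measurable_fun setT (g n : borel S -> R).
  apply: measurable_funM; first exact: measurable_ruelle_integrand.
  exact: measurableT_comp mU (continuous_borel_measurable (continuous_sappendz x)).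
have gB n z : `|g n z| <= 1 * expR M * 1.
  rewrite normrM ler_pM//; last exact: normr_indic_le1.
  by apply: ruelle_integrand_bound => y; exact: normr_indic_le1.
have g_cvg z : g n z @[n --> \oo] --> \1_U (sappend x z) * expR (phi (sappend x z)).
  have uxz := cvg_comp _ _ ux (continuous_sappendx z x).
  under eq_fun do rewrite /g mulrAC.
  apply: cvgM; first exact: indic_open_cvg oU uxz.
  exact: cvg_comp uxz (continuous_expR_phi _).
have Ig := cvg_Rintegral_bounded (m := mu) mg gB g_cvg.
rewrite /ruelle -(cvg_lim _ Ig)//; apply: limr_le; first exact: cvgP Ig.
apply: nearW => n; apply: le_trans (ur n); apply: le_Rintegral => //.
- exact: bounded_integrable (mg n) (gB n).
- exact: integrable_ruelle_integrand (u n) mU (normr_indic_le1 U).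
- by move=> z _; rewrite /g ler_piMr ?mulr_ge0 ?expR_ge0.
Qed.

Lemma lower_semicontinuous_ruelle_indic U : open U ->
  lower_semicontinuous (EFin \o ruelle \1_U).
Proof.
move=> oU x r rx; exists [set y | (r%:E < (ruelle \1_U y)%:E)%E] => //.
apply: contrapT => /(@not_nbhs_seq R {ptws nat -> S} _ _)[u ux uN].
move: rx; rewrite /= lte_fin ltNge => /negP; apply.
apply: ruelle_indic_le_of_cvg oU ux _ => n.
by have /negP := uN n; rewrite lte_fin -leNgt.
Qed.

Lemma measurable_ruelle_indic U : open U -> measurable_fun setT (ruelle \1_U : X -> R).
Proof.
move=> oU; apply: lower_semicontinuous_borel_measurable.
exact: lower_semicontinuous_ruelle_indic.
Qed.

Lemma ruelle_stair h B n : continuous h -> ruelle (stair h B n) =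
  fun x => \sum_(k < n.+1 * B) n.+1%:R^-1 * ruelle \1_(stair_level h n k) x.
Proof.
move=> hc; apply/funext => x.
have mI k := measurable_indic_stair_level h n k hc.
exact: (ruelle_lincomb _ (fun=> n.+1%:R^-1) x mI (fun k => normr_indic_le1 _)).
Qed.

Lemma measurable_ruelle_stair h B n : continuous h ->
  measurable_fun setT (ruelle (stair h B n) : X -> R).
Proof.
move=> hc; rewrite ruelle_stair//; apply: measurable_sum => k.
by apply: measurable_funM => //; apply: measurable_ruelle_indic; exact: open_stair_level.
Qed.

Lemma Lstar_ruelle nu A : measurable (A : set X) ->
  Lstar mu phi nu A = cint nu (fun x => (ruelle \1_A x)%:E).
Proof.
move=> mA; rewrite /Lstar; congr cint; apply/funext => x.
have mI : measurable_fun setT (\1_A : X -> R) by exact: measurable_indic.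
exact: bounded_RintegralE (measurable_ruelle_integrand x mI)
  (ruelle_integrand_bound x ^~ (normr_indic_le1 A)).
Qed.

Section duality.
Context {lam nu : {charge set X -> \bar R}}.
Hypothesis lam_Lstar : forall A, measurable A -> lam A = Lstar mu phi nu A.

Lemma Rcint_ruelle_indic U : open U -> Rcint lam \1_U = Rcint nu (ruelle \1_U).
Proof.
move=> oU; have mU : measurable (U : set X) by exact: sub_sigma_algebra.
rewrite Rcint_indic// lam_Lstar// Lstar_ruelle// (cintE _ (B := 1 * expR M))//.
  exact: measurable_ruelle_indic.
move=> x; apply: ruelle_bound => [|y]; [exact: measurable_indic|exact: normr_indic_le1].
Qed.

Lemma Rcint_ruelle_stair h B n : continuous h ->
  Rcint lam (stair h B n) = Rcint nu (ruelle (stair h B n)).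
Proof.
move=> hc.
have mI k := measurable_indic_stair_level h n k hc.
have mK k := measurable_ruelle_indic _ (open_stair_level h n k hc).
have KB k x := ruelle_bound x (mI k) (normr_indic_le1 (stair_level h n k)).
rewrite ruelle_stair//; set c := n.+1%:R^-1.
have -> : Rcint lam (stair h B n) =
    \sum_(k < n.+1 * B) c * Rcint lam \1_(stair_level h n k).
  exact: (Rcint_lincomb lam _ (fun=> c) mI (fun k => normr_indic_le1 _)).
have -> : Rcint nu (fun x => \sum_(k < n.+1 * B) c * ruelle \1_(stair_level h n k) x) =
    \sum_(k < n.+1 * B) c * Rcint nu (ruelle \1_(stair_level h n k)).
  exact: (Rcint_lincomb nu _ (fun=> c) mK KB).
by apply: eq_bigr => k _; rewrite Rcint_ruelle_indic//; exact: open_stair_level.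
Qed.

Lemma Rcint_ruelle_ge0 h : Cb h -> (forall y, 0 <= h y) ->
  Rcint lam h = Rcint nu (ruelle h).
Proof.
move=> [hc [b hb]] h0; pose B := (Num.truncn b).+1.
have hB y : 0 <= h y <= B%:R.
  by rewrite h0 (le_trans (ler_norm _) (le_trans (hb y) (ltW (truncnS_gt _)))).
have sB n y : `|stair h B n y| <= B%:R.
  have [/andP[s0 sh] _] := stair_bounds h B n (hB y).
  by rewrite ger0_norm// (le_trans sh); case/andP: (hB y).
have ms n := measurable_stair h B n hc.
have h_stair y := stair_cvg h B (hB y).
have lam_cvg := cvg_Rcint lam ms sB h_stair.
have nu_cvg : Rcint lam (stair h B n) @[n --> \oo] --> Rcint nu (ruelle h).
  apply: cvg_trans (cvg_Rcint nu (fun n => measurable_ruelle_stair h B n hc)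
    (fun n x => ruelle_bound x (ms n) (sB n)) (fun x => ruelle_cvg x ms sB h_stair)).
  by apply: near_eq_cvg; apply: nearW => n; rewrite Rcint_ruelle_stair.
exact: cvg_unique lam_cvg nu_cvg.
Qed.

Lemma Rcint_ruelle h : Cb h -> Rcint lam h = Rcint nu (ruelle h).
Proof.
move=> hCb; have [hc [b hb]] := hCb.
have b0 : 0 <= b := le_trans (normr_ge0 _) (hb point).
have hbB y : `|h y + b| <= b + b by rewrite (le_trans (ler_normD _ _))// lerD// ger0_norm.
have bB (y : Sigma S) : `|b| <= b + b by rewrite ger0_norm// lerDr.
have hb_Cb : Cb (fun y => h y + b).
  by split; [move=> y; apply: cvgD; [exact: hc|exact: cvg_cst]|exists (b + b)].
have b_Cb : Cb (fun _ : Sigma S => b).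
  by split; [exact: cst_continuous|exists (b + b); exact: bB].
have hb0 y : 0 <= h y + b.
  by rewrite -[b]opprK subr_ge0; move: (hb y); rewrite ler_norml => /andP[].
have mhb := measurable_Cb hb_Cb; have mb := measurable_Cb b_Cb.
have -> : h = fun y => (h y + b) - b by apply/funext => y; rewrite addrK.
rewrite (RcintB lam mhb mb hbB bB) !Rcint_ruelle_ge0//.
rewrite -(RcintB nu (measurable_Cb (ruelle_Cb hb_Cb)) (measurable_Cb (ruelle_Cb b_Cb))
  (fun x => ruelle_bound x mhb hbB) (fun x => ruelle_bound x mb bB)).
by congr Rcint; apply/funext => x; rewrite (ruelleB x mhb mb hbB bB).
Qed.

Lemma cint_Lstar {f} : Cb f ->
  cint lam (fun x => (f x)%:E) = cint nu (fun x => (ruelle f x)%:E).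
Proof.
move=> fCb; have mf := measurable_Cb fCb; have [_ [B fB]] := fCb.
rewrite (cintE lam mf fB) (cintE nu (measurable_Cb (ruelle_Cb fCb))
  (fun x => ruelle_bound x mf fB)).
by rewrite Rcint_ruelle.
Qed.

End duality.

End ruelle_operator.

Theorem lemma2p1 (R : realType) (S : completePseudoMetricType R)
  (S_hausdorff : hausdorff_space S) (S_separable : separable S)
  (mu : probability (borel S) R) (phi : Sigma S -> R) (phi_Cb : Cb phi)
  (nu_ : nat -> {charge set borel (Sigma S) -> \bar R})
  (nu : {charge set borel (Sigma S) -> \bar R})
  (Lnu_ : nat -> {charge set borel (Sigma S) -> \bar R})
  (Lnu : {charge set borel (Sigma S) -> \bar R}) :
  (forall n (A : set (borel (Sigma S))), measurable A -> Lnu_ n A = Lstar mu phi (nu_ n) A) ->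
  (forall A : set (borel (Sigma S)), measurable A -> Lnu A = Lstar mu phi nu A) ->
  weak_cvg nu_ nu -> weak_cvg Lnu_ Lnu.
Proof.
move=> Lnu_E LnuE nu_cvg f fCb.
have [phi_cont [M phiM]] := phi_Cb.
have phi_le y : phi y <= M := le_trans (ler_norm _) (phiM y).
rewrite (cint_Lstar _ _ _ phi_cont phi_le LnuE fCb).
under eq_cvg do rewrite (cint_Lstar _ _ _ phi_cont phi_le (Lnu_E _) fCb).
exact/nu_cvg/(ruelle_Cb mu _ _ phi_cont phi_le).
Qed.
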